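(* Let $X$ and $Y$ be metric spaces and $\mathcal F\subseteq Y^X$. (1) If $\mathcal F$ has (PECP), then $\mathcal F$ is equi-Baire 1. (2) If $X$ is hereditarily Baire, then $\mathcal F$ is equi-Baire 1 if and only if $\mathcal F$ has (PECP).
   Context: Let $(X,\rho)$, $(Y,d)$ be metric spaces. $\mathcal F\subseteq Y^X$ is equi-Baire 1 if for every $\varepsilon>0$ there is $\delta_\varepsilon\colon X\to(0,\infty)$ such that for all $x,y\in X$ and all $f\in\mathcal F$, $\rho(x,y)<\min\{\delta_\varepsilon(x),\delta_\varepsilon(y)\}$ implies $d(f(x),f(y))<\varepsilon$. $\mathcal F$ has (PECP) if for every nonempty closed $F\subseteq X$ the family $\{f|_F:f\in\mathcal F\}$ has a point of equicontinuity, i.e. a point $x\in F$ such that for every $\varepsilon>0$ there is a neighborhood $U$ of $x$ with $d(f(x'),f(x))<\varepsilon$ for all $x'\in U\cap F$ and $f\in\mathcal F$. A space is hereditarily Baire if every nonempty closed subspace is a Baire space (every nonempty open subset nonmeager in itself). *)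

From Stdlib Require Export Reals.
Open Scope R_scope.

Definition is_metric {X : Type} (m : X -> X -> R) : Prop :=
  (forall x y, m x y = 0 <-> x = y) /\
  (forall x y, m x y = m y x) /\
  (forall x y z, m x z <= m x y + m y z).

Section Metric.
Context {X : Type} (rho : X -> X -> R).

Definition nbhd (x : X) (U : X -> Prop) : Prop :=
  exists r, 0 < r /\ forall y, rho x y < r -> U y.

Definition closed_set (F : X -> Prop) : Prop :=
  forall x, (forall r, 0 < r -> exists y, F y /\ rho x y < r) -> F x.

Definition open_in (S U : X -> Prop) : Prop :=
  (forall x, U x -> S x) /\
  forall x, U x -> exists r, 0 < r /\ forall y, S y -> rho x y < r -> U y.

Definition closure_in (S A : X -> Prop) (x : X) : Prop :=
  S x /\ forall r, 0 < r -> exists y, A y /\ rho x y < r.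

Definition interior_in (S B : X -> Prop) (x : X) : Prop :=
  S x /\ exists r, 0 < r /\ forall y, S y -> rho x y < r -> B y.

Definition nowhere_dense_in (S A : X -> Prop) : Prop :=
  (forall x, A x -> S x) /\ forall x, ~ interior_in S (closure_in S A) x.

Definition meager_in (S A : X -> Prop) : Prop :=
  exists N : nat -> X -> Prop,
    (forall n, nowhere_dense_in S (N n)) /\
    forall x, A x -> exists n, N n x.

Definition Baire_space (S : X -> Prop) : Prop :=
  forall U, open_in S U -> (exists x, U x) -> ~ meager_in U U.

Definition hereditarily_Baire : Prop :=
  forall F, closed_set F -> (exists x, F x) -> Baire_space F.

End Metric.

Section Families.
Context {X Y : Type} (rho : X -> X -> R) (d : Y -> Y -> R).

Definition equi_Baire1 (fam : (X -> Y) -> Prop) : Prop :=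
  forall eps, 0 < eps ->
    exists delta : X -> R, (forall x, 0 < delta x) /\
      forall x y f, fam f -> rho x y < Rmin (delta x) (delta y) ->
        d (f x) (f y) < eps.

Definition equicont_point (fam : (X -> Y) -> Prop) (F : X -> Prop) (x : X) : Prop :=
  F x /\ forall eps, 0 < eps ->
    exists U, nbhd rho x U /\
      forall x' f, U x' -> F x' -> fam f -> d (f x') (f x) < eps.

Definition PECP (fam : (X -> Y) -> Prop) : Prop :=
  forall F, closed_set rho F -> (exists x, F x) ->
    exists x, equicont_point fam F x.

End Families.

(* (1) Iterate, transfinitely, the derivation that deletes from a set A the
   points at which the oscillation of the family on A is below eps.  Every
   stage is closed, so by (PECP) a nonempty stage always loses a point; hence
   each x has a last stage C_x containing it, and the oscillation on C_x at x
   is below eps, witnessed by a radius delta(x).  The stages form a chain, so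
   of any two points x, y one of C_x, C_y contains both, which gives
   d(f x, f y) < eps as soon as rho(x, y) < min(delta x, delta y).
   (2) On a closed subspace F that is Baire, equi-Baire 1 makes the points of
   small oscillation dense: some {x : delta(x) > 1/n} is dense in a piece of
   any open set, and two of its points at distance < 1/n are eps/4-close under
   every f.  These points also form an open set, so the complements are
   nowhere dense, and a point outside all of them is a point of
   equicontinuity. *)

From Stdlib Require Import Reals Lra Lia Classical ClassicalChoice.
Open Scope R_scope.

Lemma metric_refl {X} (m : X -> X -> R) : is_metric m -> forall x, m x x = 0.
Proof. intros [H _] x. now apply H. Qed.

Lemma metric_sym {X} (m : X -> X -> R) : is_metric m -> forall x y, m x y = m y x.
Proof. now intros [_ [H _]]. Qed.

Lemma metric_triangle {X} (m : X -> X -> R) :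
  is_metric m -> forall x y z, m x z <= m x y + m y z.
Proof. now intros [_ [_ H]]. Qed.

Lemma inv_INR_S_pos (n : nat) : 0 < / INR (S n).
Proof. apply Rinv_0_lt_compat, lt_0_INR. lia. Qed.

Lemma exists_inv_INR_S_lt (e : R) : 0 < e -> exists n : nat, / INR (S n) < e.
Proof.
  intros He. destruct (archimed_cor1 e He) as [[|n] [Hn Hpos]]; [lia|].
  now exists n.
Qed.

Definition subset {X} (A B : X -> Prop) : Prop := forall x, A x -> B x.

Section Tower.
Context {X : Type} (D : (X -> Prop) -> X -> Prop).
Hypothesis D_sub : forall A, subset (D A) A.
Hypothesis D_mono : forall A B, subset A B -> subset (D A) (D B).

(* The transfinite iterates of D, presented without ordinals: the least family
   closed under D and under arbitrary intersections (the empty one being the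
   whole space). *)
Inductive tower : (X -> Prop) -> Prop :=
| tower_meet (S : (X -> Prop) -> Prop) :
    (forall A, S A -> tower A) -> tower (fun x => forall A, S A -> A x)
| tower_deriv A : tower A -> tower (D A).

(* The Bourbaki-Witt argument: every member of the tower is extreme, and
   extremality of A forces every member to lie above A or below D A. *)
Definition extreme (A : X -> Prop) : Prop :=
  forall B, tower B -> subset A B -> subset B A \/ subset A (D B).

Lemma extreme_split A :
  extreme A -> forall B, tower B -> subset A B \/ subset B (D A).
Proof.
  intros HA B HB. induction HB as [S HS IH | B HB IH].
  - destruct (classic (exists C, S C /\ subset C (D A))) as [[C [SC HC]] | Hn].
    + right. intros x Hx. exact (HC x (Hx C SC)).
    + left. intros x Ax C SC. destruct (IH C SC) as [H | H]; [now apply H|].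
      exfalso. apply Hn. now exists C.
  - destruct IH as [HAB | HBD].
    + destruct (classic (subset B A)) as [HBA | HBA].
      * right. now apply D_mono.
      * destruct (HA B HB HAB) as [H | H]; [contradiction | now left].
    + right. intros x Hx. now apply HBD, D_sub.
Qed.

Lemma tower_extreme A : tower A -> extreme A.
Proof.
  intros HA. induction HA as [S HS IH | A HA IH]; intros B HB HAB.
  - destruct (classic (subset B (fun x => forall A, S A -> A x))) as [H | H];
      [now left | right].
    destruct (not_all_ex_not _ _ H) as [x Hx].
    destruct (imply_to_and _ _ Hx) as [Bx Hx'].
    destruct (not_all_ex_not _ _ Hx') as [C HC].
    destruct (imply_to_and _ _ HC) as [SC nCx].
    destruct (extreme_split C (IH C SC) B HB) as [HCB | HBC].
    + destruct (IH C SC B HB HCB) as [HBC | HCD].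
      * exfalso. exact (nCx (HBC x Bx)).
      * intros y Hy. exact (HCD y (Hy C SC)).
    + exfalso. exact (nCx (D_sub C x (HBC x Bx))).
  - destruct (extreme_split A IH B HB) as [HAB' | HBD]; [|now left].
    right. destruct (classic (subset B A)) as [HBA | HBA]; [now apply D_mono|].
    destruct (IH B HB HAB') as [H | H]; [contradiction|].
    intros x Hx. now apply H, D_sub.
Qed.

Lemma tower_chain A B : tower A -> tower B -> subset A B \/ subset B A.
Proof.
  intros HA HB. destruct (extreme_split A (tower_extreme A HA) B HB) as [H | H].
  - now left.
  - right. intros x Hx. now apply D_sub, H.
Qed.

End Tower.

Section Subspaces.
Context {X : Type} (rho : X -> X -> R).
Hypothesis rho_metric : is_metric rho.

Lemma closed_meet (S : (X -> Prop) -> Prop) :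
  (forall A, S A -> closed_set rho A) ->
  closed_set rho (fun x => forall A, S A -> A x).
Proof.
  intros HS x Hx A SA. apply (HS A SA). intros r Hr.
  destruct (Hx r Hr) as [y [Hy Hxy]]. exists y. split; [exact (Hy A SA) | exact Hxy].
Qed.

Lemma open_in_self (F : X -> Prop) : open_in rho F F.
Proof.
  split; [easy|]. intros x Fx. exists 1. split; [lra | easy].
Qed.

Lemma open_in_ball (F : X -> Prop) x r :
  open_in rho F (fun y => F y /\ rho x y < r).
Proof.
  split; [now intros y []|]. intros y [Fy Hxy].
  exists (r - rho x y). split; [lra|]. intros z Fz Hyz. split; [exact Fz|].
  pose proof (metric_triangle rho rho_metric x y z). lra.
Qed.

Lemma Baire_somewhere_dense (F V : X -> Prop) (A : nat -> X -> Prop) :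
  Baire_space rho F -> open_in rho F V -> (exists x, V x) ->
  (forall n x, A n x -> V x) -> (forall x, V x -> exists n, A n x) ->
  exists n x, interior_in rho V (closure_in rho V (A n)) x.
Proof.
  intros HB HV Vne AV Acover. apply NNPP. intros Hnone.
  apply (HB V HV Vne). exists A. split; [|exact Acover].
  intros n. split; [exact (AV n)|]. intros x Hx. apply Hnone. now exists n, x.
Qed.

End Subspaces.

Section Oscillation.
Context {X Y : Type} (rho : X -> X -> R) (d : Y -> Y -> R) (fam : (X -> Y) -> Prop).
Hypothesis rho_metric : is_metric rho.
Hypothesis d_metric : is_metric d.

Definition small_oscillation (A : X -> Prop) (eps : R) (x : X) : Prop :=
  exists r, 0 < r /\ forall y z f, A y -> A z -> rho x y < r -> rho x z < r ->
    fam f -> d (f y) (f z) < eps.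

Definition osc_derivative (eps : R) (A : X -> Prop) : X -> Prop :=
  fun x => A x /\ ~ small_oscillation A eps x.

Lemma small_oscillation_of_center (A : X -> Prop) eps p s : 0 < s ->
  (forall y f, A y -> rho p y < s -> fam f -> d (f y) (f p) < eps / 2) ->
  small_oscillation A eps p.
Proof.
  intros Hs Hp. exists s. split; [exact Hs|]. intros y z f Ay Az Hy Hz Hf.
  pose proof (Hp y f Ay Hy Hf). pose proof (Hp z f Az Hz Hf).
  pose proof (metric_triangle d d_metric (f y) (f p) (f z)).
  rewrite (metric_sym d d_metric (f p) (f z)) in *. lra.
Qed.

Lemma small_oscillation_open (A : X -> Prop) eps x :
  small_oscillation A eps x ->
  exists r, 0 < r /\ forall y, rho x y < r -> small_oscillation A eps y.
Proof.
  intros [s [Hs Hx]]. exists (s / 2). split; [lra|]. intros y Hxy.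
  exists (s / 2). split; [lra|]. intros z w f Az Aw Hyz Hyw Hf.
  pose proof (metric_triangle rho rho_metric x y z).
  pose proof (metric_triangle rho rho_metric x y w).
  apply Hx; auto; lra.
Qed.

Lemma equicont_point_small_oscillation (F : X -> Prop) p eps :
  equicont_point rho d fam F p -> 0 < eps -> small_oscillation F eps p.
Proof.
  intros [_ Hp] Heps. destruct (Hp (eps / 2)) as [U [[r [Hr HU]] HpU]]; [lra|].
  apply (small_oscillation_of_center F eps p r Hr).
  intros y f Fy Hy Hf. exact (HpU y f (HU y Hy) Fy Hf).
Qed.

Lemma equicont_point_of_small_oscillation (F : X -> Prop) x :
  F x -> (forall k, small_oscillation F (/ INR (S k)) x) ->
  equicont_point rho d fam F x.
Proof.
  intros Fx Hx. split; [exact Fx|]. intros eps Heps.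
  destruct (exists_inv_INR_S_lt eps Heps) as [k Hk].
  destruct (Hx k) as [s [Hs Hosc]].
  exists (fun y => rho x y < s). split; [now exists s|].
  intros y f Hxy Fy Hf.
  assert (Hxx : rho x x < s) by (rewrite (metric_refl rho rho_metric); lra).
  pose proof (Hosc y x f Fy Fx Hxy Hxx Hf). lra.
Qed.

Lemma osc_derivative_sub eps A : subset (osc_derivative eps A) A.
Proof. now intros x []. Qed.

Lemma osc_derivative_mono eps A B :
  subset A B -> subset (osc_derivative eps A) (osc_derivative eps B).
Proof.
  intros HAB x [Ax Hx]. split; [now apply HAB|]. intros [r [Hr Hosc]].
  apply Hx. exists r. split; [exact Hr|]. intros y z f Ay Az. now apply Hosc; apply HAB.
Qed.

Lemma osc_derivative_closed eps A :
  closed_set rho A -> closed_set rho (osc_derivative eps A).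
Proof.
  intros HA x Hx.
  assert (Ax : A x).
  { apply HA. intros r Hr. destruct (Hx r Hr) as [y [[Ay _] Hxy]]. now exists y. }
  split; [exact Ax|]. intros [r [Hr Hosc]].
  destruct (Hx (r / 2)) as [y [[Ay Hy] Hxy]]; [lra|].
  apply Hy. exists (r / 2). split; [lra|]. intros z w f Az Aw Hyz Hyw Hf.
  pose proof (metric_triangle rho rho_metric x y z).
  pose proof (metric_triangle rho rho_metric x y w).
  apply Hosc; auto; lra.
Qed.

Lemma osc_tower_closed eps A :
  tower (osc_derivative eps) A -> closed_set rho A.
Proof.
  intros HA. induction HA as [S HS IH | A HA IH].
  - now apply closed_meet.
  - now apply osc_derivative_closed.
Qed.

Definition last_stage (eps : R) (x : X) : X -> Prop :=
  fun z => forall A, tower (osc_derivative eps) A /\ A x -> A z.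

Lemma last_stage_tower eps x : tower (osc_derivative eps) (last_stage eps x).
Proof. apply tower_meet. now intros A []. Qed.

Lemma last_stage_self eps x : last_stage eps x x.
Proof. now intros A []. Qed.

Lemma last_stage_small_oscillation eps x :
  PECP rho d fam -> 0 < eps -> small_oscillation (last_stage eps x) eps x.
Proof.
  intros HP Heps. apply NNPP. intros Hx.
  set (C := last_stage eps x).
  assert (HC : subset C (osc_derivative eps C)).
  { intros z Hz. apply Hz. split; [apply tower_deriv, last_stage_tower|].
    split; [apply last_stage_self | exact Hx]. }
  destruct (HP C (osc_tower_closed eps C (last_stage_tower eps x)))
    as [p Hp]; [exists x; apply last_stage_self|].
  destruct (HC p (proj1 Hp)) as [_ Hosc].
  exact (Hosc (equicont_point_small_oscillation C p eps Hp Heps)).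
Qed.

Lemma PECP_equi_Baire1 : PECP rho d fam -> equi_Baire1 rho d fam.
Proof.
  intros HP eps Heps.
  destruct (choice (fun x r => 0 < r /\ forall y z f,
      last_stage eps x y -> last_stage eps x z -> rho x y < r -> rho x z < r ->
      fam f -> d (f y) (f z) < eps)) as [delta Hdelta].
  { intros x. exact (last_stage_small_oscillation eps x HP Heps). }
  exists delta. split; [intros x; apply Hdelta|].
  intros x y f Hf Hxy.
  pose proof (Rmin_l (delta x) (delta y)). pose proof (Rmin_r (delta x) (delta y)).
  pose proof (proj1 (Hdelta x)). pose proof (proj1 (Hdelta y)).
  pose proof (metric_refl rho rho_metric x). pose proof (metric_refl rho rho_metric y).
  destruct (tower_chain _ (osc_derivative_sub eps) (osc_derivative_mono eps)
              _ _ (last_stage_tower eps x) (last_stage_tower eps y)) as [Hc | Hc].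
  - apply (proj2 (Hdelta y) x y f (Hc x (last_stage_self eps x)) (last_stage_self eps y));
      [rewrite (metric_sym rho rho_metric) | |]; auto; lra.
  - apply (proj2 (Hdelta x) x y f (last_stage_self eps x) (Hc y (last_stage_self eps y)));
      auto; lra.
Qed.

Lemma equi_Baire1_small_oscillation_dense (F V : X -> Prop) e :
  Baire_space rho F -> equi_Baire1 rho d fam -> 0 < e ->
  open_in rho F V -> (exists x, V x) -> exists p, V p /\ small_oscillation F e p.
Proof.
  intros HB HE He HV Vne.
  destruct (HE (e / 4)) as [delta [delta_pos Hdelta]]; [lra|].
  destruct (Baire_somewhere_dense rho F V (fun n x => V x /\ / INR (S n) < delta x)
              HB HV Vne) as [n [x [Vx [r [Hr Hint]]]]].
  { now intros n y []. }
  { intros y Vy. destruct (exists_inv_INR_S_lt (delta y) (delta_pos y)) as [n Hn].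
    now exists n. }
  set (c := / INR (S n)). assert (Hc : 0 < c) by apply inv_INR_S_pos.
  destruct (Hint x Vx) as [_ Hcl]; [rewrite (metric_refl rho rho_metric); lra|].
  destruct (Hcl (r / 2)) as [p [[Vp Hp] Hxp]]; [lra|]. change (c < delta p) in Hp.
  destruct HV as [VF Vopen]. destruct (Vopen p Vp) as [r1 [Hr1 Hball]].
  exists p. split; [exact Vp|].
  apply (small_oscillation_of_center F e p (Rmin r1 (Rmin (r / 2) (c / 2)))).
  { repeat apply Rmin_pos; lra. }
  intros y f Fy Hpy Hf.
  pose proof (Rmin_l r1 (Rmin (r / 2) (c / 2))).
  pose proof (Rmin_r r1 (Rmin (r / 2) (c / 2))).
  pose proof (Rmin_l (r / 2) (c / 2)). pose proof (Rmin_r (r / 2) (c / 2)).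
  assert (Vy : V y) by (apply Hball; [exact Fy | lra]).
  destruct (Hint y Vy) as [_ Hcly];
    [pose proof (metric_triangle rho rho_metric x p y); lra|].
  destruct (Hcly (Rmin (delta y) (c / 2))) as [q [[Vq Hq] Hyq]];
    [apply Rmin_pos; [apply delta_pos | lra]|]. change (c < delta q) in Hq.
  pose proof (Rmin_l (delta y) (c / 2)). pose proof (Rmin_r (delta y) (c / 2)).
  assert (Hqp : rho q p < c).
  { pose proof (metric_triangle rho rho_metric q y p).
    rewrite (metric_sym rho rho_metric q y), (metric_sym rho rho_metric y p) in *. lra. }
  assert (Hyq' : d (f y) (f q) < e / 4) by (apply (Hdelta y q f Hf), Rmin_glb_lt; lra).
  assert (Hqp' : d (f q) (f p) < e / 4) by (apply (Hdelta q p f Hf), Rmin_glb_lt; lra).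
  pose proof (metric_triangle d d_metric (f y) (f q) (f p)). lra.
Qed.

Lemma not_small_oscillation_nowhere_dense (F : X -> Prop) e :
  Baire_space rho F -> equi_Baire1 rho d fam -> 0 < e ->
  nowhere_dense_in rho F (fun x => F x /\ ~ small_oscillation F e x).
Proof.
  intros HB HE He. split; [now intros x []|]. intros x [Fx [r [Hr Hint]]].
  destruct (equi_Baire1_small_oscillation_dense F (fun y => F y /\ rho x y < r) e
              HB HE He (open_in_ball rho rho_metric F x r)) as [p [[Fp Hxp] Hp]].
  { exists x. split; [exact Fx | rewrite (metric_refl rho rho_metric); lra]. }
  destruct (small_oscillation_open F e p Hp) as [s [Hs Hnear]].
  destruct (Hint p Fp Hxp) as [_ Hcl].
  destruct (Hcl s Hs) as [q [[_ Hq] Hpq]].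
  exact (Hq (Hnear q Hpq)).
Qed.

Lemma equi_Baire1_PECP :
  hereditarily_Baire rho -> equi_Baire1 rho d fam -> PECP rho d fam.
Proof.
  intros hB HE F Fc Fne. pose proof (hB F Fc Fne) as HB.
  apply NNPP. intros Hnone. apply (HB F (open_in_self rho F) Fne).
  exists (fun k x => F x /\ ~ small_oscillation F (/ INR (S k)) x). split.
  - intros k. apply not_small_oscillation_nowhere_dense; auto. apply inv_INR_S_pos.
  - intros x Fx. apply NNPP. intros Hx. apply Hnone. exists x.
    apply equicont_point_of_small_oscillation; [exact Fx|]. intros k.
    apply NNPP. intros Hk. apply Hx. now exists k.
Qed.

End Oscillation.

Theorem proposition3p5 :
  forall (X Y : Type) (rho : X -> X -> R) (d : Y -> Y -> R),
    is_metric rho -> is_metric d ->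
    forall fam : (X -> Y) -> Prop,
      (PECP rho d fam -> equi_Baire1 rho d fam) /\
      (hereditarily_Baire rho ->
         (equi_Baire1 rho d fam <-> PECP rho d fam)).
Proof.
  intros X Y rho d Hrho Hd fam.
  split; [now apply PECP_equi_Baire1|].
  intros hB. split.
  - now apply equi_Baire1_PECP.
  - now apply PECP_equi_Baire1.
Qed.
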